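(* Let $(S,* )$ be a finite cycle set of class $d\ge 2$ with germ $\overline G$. Then $\overline G$ is permutation-free: the only permutation matrix belonging to $\overline G$ is the identity matrix.
   Context: A cycle set is a set $S$ with a binary operation $*$ such that each $t\mapsto s*t$ is bijective and $(s*t)*(s*u)=(t*s)*(t*u)$ for all $s,t,u$. Write $S=\{s_1,\dots,s_n\}$, let $\psi(s)\in\mathfrak S_n$ satisfy $s_i*s_j=s_{\psi(s_i)(j)}$, $T(s)=s*s$, $\psi_k(s)=\psi(T^{k-1}(s))\circ\cdots\circ\psi(s)$; the class $d$ is the least $d\ge1$ with $\psi_d(s)=\mathrm{id}$ for all $s$. For $\sigma\in\mathfrak S_n$, $P_\sigma$ is the matrix with $1$ at $(i,\sigma(i))$ and $0$ elsewhere, and a permutation matrix is a matrix of this form. With $\zeta_d=e^{2i\pi/d}$, the germ $\overline G$ is the subgroup of $GL_n(\mathbb C)$ generated by $\bar s_i=\mathrm{diag}(1,\dots,1,\zeta_d,1,\dots,1)P_{\psi(s_i)}$ ($\zeta_d$ in position $i$), $1\le i\le n$. *)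

From HB Require Import structures.
From mathcomp Require Import all_boot all_order all_algebra all_fingroup all_field.
Set Implicit Arguments. Unset Strict Implicit. Unset Printing Implicit Defensive.
Import GRing.Theory Num.Theory.
Local Open Scope ring_scope.

(* A finite set S = {s_1,...,s_n} is modelled by 'I_n; cop s t = s * t. *)
Section CycleSet.
Variable n : nat.
Variable cop : 'I_n -> 'I_n -> 'I_n.

Definition is_cycle_set : Prop :=
  (forall s, bijective (cop s)) /\
  (forall s t u, cop (cop s t) (cop s u) = cop (cop t s) (cop t u)).

Definition Tmap (s : 'I_n) : 'I_n := cop s s.

Fixpoint psik (k : nat) (s : 'I_n) : 'I_n -> 'I_n :=
  match k with
  | 0 => id
  | k'.+1 => cop (iter k' Tmap s) \o psik k' s
  end.

Definition is_class (d : nat) : Prop :=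
  (0 < d)%N /\ (forall s, psik d s =1 id) /\
  (forall d', (0 < d')%N -> (d' < d)%N -> exists s, ~ (psik d' s =1 id)).

Definition psi (Hb : forall s, bijective (cop s)) (s : 'I_n) : 'S_n :=
  perm (bij_inj (Hb s)).

(* zeta_d = e^{2 i pi / d}: d.-root (-1) is the d-th root of -1 of minimal
   nonnegative argument, i.e. e^{i pi / d} (for d >= 2). *)
Definition zeta (d : nat) : algC := (d.-root (-1)) ^+ 2.

(* generator \bar s_i = diag(1,..,zeta_d (position i),..,1) P_{psi(s_i)} ,
   where P_sigma = perm_mx sigma has a 1 at (j, sigma j). *)
Definition germ_gen (Hb : forall s, bijective (cop s)) (d : nat) (i : 'I_n)
  : 'M[algC]_n :=
  diag_mx (\row_(j < n) (if j == i then zeta d else 1)) *m perm_mx (psi Hb i).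

Inductive in_germ (Hb : forall s, bijective (cop s)) (d : nat) : 'M[algC]_n -> Prop :=
  | germ1 : in_germ Hb d 1%:M
  | germ_mul A i : in_germ Hb d A -> in_germ Hb d (A *m germ_gen Hb d i)
  | germ_mulV A i : in_germ Hb d A -> in_germ Hb d (A *m invmx (germ_gen Hb d i)).

End CycleSet.

From mathcomp Require Import all_boot all_order all_algebra all_fingroup all_field.
From mathcomp Require Import ring zify.
Set Implicit Arguments. Unset Strict Implicit. Unset Printing Implicit Defensive.
Import Order.TTheory GRing.Theory Num.Theory.
Local Open Scope ring_scope.

(* Every element of the germ is a monomial matrix
   germ_mx a = diag (zeta^(a 1), ..., zeta^(a n)) * P_(exps_perm a)
   for an exponent vector a in (Z/dZ)^n.  Right multiplication by a generator
   increments one coordinate of a and acts on the permutation part by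
   germ_step; these actions commute by the cycle set law and have order
   dividing d because d is the class, so the permutation part is a function of
   a.  Closure under inverse generators comes for free: right multiplication
   by a generator is injective on the finite set of exponent vectors.  If
   germ_mx a is a permutation matrix then zeta^(a k) = 1 for all k, so a = 0
   because zeta is a primitive d-th root of unity, and the permutation is
   exps_perm 0 = 1.

   Since zeta_d is defined as r^2 with r = d.-root (-1), the root of -1 of
   largest real part in the closed upper half plane, its primitivity has to be
   proved: multiplying any other d-th root of -1 of the upper half plane by
   r^-2 strictly increases its real part, so by descent every d-th root of -1
   is a power of r, and r is a primitive 2d-th root of unity. *)

Lemma prim_expr_half (R : idomainType) (n : nat) (z : R) :
  (0 < n)%N -> (2 * n).-primitive_root z -> z ^+ n = -1.
Proof.
move=> n_gt0 prim_z.
have : (z ^+ n) ^+ 2 == 1 by rewrite -exprM mulnC prim_expr_order.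
rewrite sqrf_eq1 => /orP[/eqP zn1 | /eqP //].
have := prim_order_dvd prim_z n; rewrite zn1 eqxx => /(dvdn_leq n_gt0).
lia.
Qed.

Section UnitCircle.
Variable C : numClosedFieldType.
Implicit Types x y r : C.

Lemma norm_expr_eqN1 n y : (0 < n)%N -> y ^+ n = -1 -> `|y| = 1.
Proof.
move=> n_gt0 yn; apply/eqP; rewrite -(pexpr_eq1 n_gt0) ?normr_ge0 //.
by rewrite -normrX yn normrN1.
Qed.

Lemma sqr_Creal_norm1 y : `|y| = 1 -> y \is Num.real -> y ^+ 2 = 1.
Proof. by move=> y1 yR; rewrite expr2 -{1}(conj_Creal yR) -normCKC y1 expr1n. Qed.

Lemma rootC_Re_max_Creal n x y :
  (0 < n)%N -> x \is Num.real -> y ^+ n = x -> 'Re y <= 'Re (n.-root x).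
Proof.
move=> n_gt0 xR yn; case/orP: (real_leVge (real0 _) (Creal_Im y)) => Imy.
  exact: rootC_Re_max.
rewrite -Re_conj rootC_Re_max // ?Im_conj ?oppr_ge0 //.
by rewrite -rmorphXn yn; apply: conj_Creal.
Qed.

(* In polar form: 0 < arg r < arg y <= pi implies |arg y - 2 arg r| < arg y. *)
Lemma Re_lt_mul_conj2 r y : `|r| = 1 -> `|y| = 1 -> 0 < 'Im r -> 0 <= 'Im y ->
  'Re y < 'Re r -> 'Re y < 'Re (y * r^* ^+ 2).
Proof.
move=> r1 y1 Imr_gt0 Imy_ge0 lt_yr.
have r_circ : 'Re r ^+ 2 + 'Im r ^+ 2 = 1 by rewrite -normC2_Re_Im r1 expr1n.
have y_circ : 'Re y ^+ 2 + 'Im y ^+ 2 = 1 by rewrite -normC2_Re_Im y1 expr1n.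
rewrite expr2 !ReM !ImM !Re_conj !Im_conj.
move: (Creal_Re y) (Creal_Re r) => xR cR.
move: ('Re r) ('Im r) ('Re y) ('Im y) => c s x t
  in r_circ y_circ lt_yr Imr_gt0 Imy_ge0 xR cR *.
have st_gt0 : 0 < s + t by rewrite ltr_wpDr.
have cross_gt0 : 0 < 1 + (x * c + t * s).
  have sum_sqr : 2 * (1 + (x * c + t * s)) = (x + c) ^+ 2 + (s + t) ^+ 2.
    apply/eqP; rewrite -subr_eq0.
    have -> : 2 * (1 + (x * c + t * s)) - ((x + c) ^+ 2 + (s + t) ^+ 2) =
              (1 - (x ^+ 2 + t ^+ 2)) + (1 - (c ^+ 2 + s ^+ 2)).
      by ring.
    by rewrite y_circ r_circ subrr addr0.
  rewrite -(pmulr_rgt0 _ (ltr0Sn _ 1)) sum_sqr ltr_wpDl ?exprn_gt0 //.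
  by rewrite real_exprn_even_ge0 // realD.
have Imw_gt0 : 0 < c * t - x * s.
  have Imw_mul : (c * t - x * s) * (s + t) = (c - x) * (1 + (x * c + t * s)).
    apply/eqP; rewrite -subr_eq0.
    have -> : (c * t - x * s) * (s + t) - (c - x) * (1 + (x * c + t * s)) =
              c * (x ^+ 2 + t ^+ 2 - 1) - x * (c ^+ 2 + s ^+ 2 - 1) by ring.
    by rewrite y_circ r_circ !subrr !mulr0 subrr.
  by rewrite -(pmulr_lgt0 _ st_gt0) Imw_mul mulr_gt0 // subr_gt0.
rewrite -subr_gt0; set gap := (X in 0 < X).
have -> : gap = 2 * s * (c * t - x * s) + x * (c ^+ 2 + s ^+ 2 - 1).
  by rewrite /gap; ring.
by rewrite r_circ subrr mulr0 addr0 !mulr_gt0 ?ltr0n.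
Qed.

End UnitCircle.

Section RootOfMinusOne.
Variables (C : numClosedFieldType) (d : nat) (z : C).
Hypotheses (d_gt1 : (1 < d)%N) (prim_z : (2 * d).-primitive_root z).
Local Notation r := (d.-root (-1 : C)).
Let d_gt0 : (0 < d)%N := ltnW d_gt1.
Let rootCN1K : r ^+ d = -1 := rootCK d_gt0 (-1).
Let norm_rootCN1 : `|r| = 1 := norm_expr_eqN1 d_gt0 rootCN1K.
Let Re_le_rootCN1 y : y ^+ d = -1 -> 'Re y <= 'Re r.
Proof. by apply: rootC_Re_max_Creal; rewrite ?rpredN ?real1. Qed.

Lemma rootCN1_unity : r ^+ (2 * d) = 1.
Proof. by rewrite mulnC exprM rootCN1K sqrrN expr1n. Qed.

Lemma conj_rootCN1 : r^* = r ^+ (2 * d).-1.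
Proof.
have r_neq0 : r != 0 by rewrite -normr_eq0 norm_rootCN1 oner_neq0.
apply: (mulIf r_neq0); rewrite -normCKC norm_rootCN1 expr1n -exprSr.
by rewrite prednK ?muln_gt0 // rootCN1_unity.
Qed.

Lemma Im_rootCN1_gt0 : 0 < 'Im r.
Proof.
have unit_real_sqr (y : C) : `|y| = 1 -> 'Im y = 0 -> y ^+ 2 = 1.
  by move=> y1 /Creal_ImP; apply: sqr_Creal_norm1.
rewrite lt_def Im_rootC_ge0 // andbT.
apply/eqP => /(unit_real_sqr _ norm_rootCN1).
move/eqP; rewrite sqrf_eq1 => /orP[/eqP r1 | /eqP rN1].
  move: rootCN1K; rewrite r1 expr1n => /eqP.
  by rewrite gt_eqF // (lt_trans (ltrN10 C) ltr01).
have zd := prim_expr_half d_gt0 prim_z.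
have z1 : `|z| = 1 := norm_expr_eqN1 d_gt0 zd.
have : 'Im z = 0.
  apply/Creal_ImP; case: (leif_normC_Re_Creal z) => le_norm <-.
  rewrite eq_le le_norm z1 real_ler_normr ?Creal_Re // lerNr.
  have ReN1 : 'Re (-1 : C) = -1 by apply/Creal_ReP; rewrite realN real1.
  by rewrite -ReN1 -rN1 Re_le_rootCN1 ?orbT.
move=> /(unit_real_sqr _ z1)/eqP; rewrite -(prim_order_dvd prim_z) => /dvdn_leq.
lia.
Qed.

Lemma rootCN1_exp_exists y : y ^+ d = -1 -> exists j, y = r ^+ j.
Proof.
pose above y := [pred i : 'I_(2 * d) | 'Re y < 'Re (z ^+ i)].
have [m] := ubnP #|above y|; elim: m y => // m IH y /[swap] yd.
rewrite ltnS; wlog Imy_ge0 : y yd / 0 <= 'Im y => [upper | above_y].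
  case/orP: (real_leVge (real0 _) (Creal_Im y)) => [|Imy_le0 above_y].
    exact: upper.
  have [|||j yj] := upper y^*; rewrite ?Im_conj ?oppr_ge0 //.
  - by rewrite -rmorphXn yd rmorphN1.
  - apply: leq_trans above_y; apply: subset_leq_card.
    by apply/subsetP => i; rewrite !inE Re_conj.
  - exists ((2 * d).-1 * j)%N.
    by rewrite -[y]conjCK yj rmorphXn exprM -conj_rootCN1.
have [-> | y_neq_r] := eqVneq y r; first by exists 1%N; rewrite expr1.
have y1 : `|y| = 1 := norm_expr_eqN1 d_gt0 yd.
have lt_yr : 'Re y < 'Re r.
  rewrite lt_neqAle Re_le_rootCN1 // andbT; apply: contra_neq y_neq_r => eqRe.
  apply: eqC_semipolar => //; first by rewrite y1 norm_rootCN1.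
  by rewrite mulr_ge0 ?Im_rootC_ge0.
pose y' := y * r^* ^+ 2.
have y'd : y' ^+ d = -1.
  rewrite exprMn -exprM mulnC exprM -rmorphXn rootCN1K rmorphN1.
  by rewrite sqrrN expr1n mulr1.
have lt_yy' : 'Re y < 'Re y'.
  by apply: Re_lt_mul_conj2; rewrite ?norm_rootCN1 ?Im_rootCN1_gt0.
have [j y'j] : exists j, y' = r ^+ j.
  apply: (IH _ _ y'd); apply: leq_trans above_y.
  apply: proper_card; apply/properP; split.
    by apply/subsetP => i; rewrite !inE; apply: lt_trans.
  have y'_unity : y' ^+ (2 * d) = 1 by rewrite mulnC exprM y'd sqrrN expr1n.
  have [i y'i] := prim_rootP prim_z y'_unity.
  by exists i; rewrite !inE -y'i ?ltxx.
exists j.+2; rewrite -addn2 exprD -y'j /y' -mulrA -exprMn.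
by rewrite -normCKC norm_rootCN1 !expr1n mulr1.
Qed.

Lemma prim_rootCN1 : (2 * d).-primitive_root r.
Proof.
have d2_gt0 : (0 < 2 * d)%N by rewrite muln_gt0 d_gt0.
have [m prim_m m_dvd] := prim_order_exists d2_gt0 rootCN1_unity.
have [j zj] := rootCN1_exp_exists (prim_expr_half d_gt0 prim_z).
suff -> : (2 * d)%N = m by [].
apply/eqP; rewrite eqn_dvd m_dvd andbT (prim_order_dvd prim_z) zj.
by rewrite -exprM mulnC exprM (prim_expr_order prim_m) expr1n.
Qed.

End RootOfMinusOne.

Lemma prim_root_zeta d : (1 < d)%N -> d.-primitive_root (zeta d).
Proof.
move=> d_gt1; have [|z prim_z] := @C_prim_root_exists (2 * d); first lia.
have := exp_prim_root (prim_rootCN1 d_gt1 prim_z) 2.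
by rewrite mulnC gcdnMl mulnK.
Qed.

Section MonomialMatrix.
Variables (R : nzRingType) (n : nat).
Implicit Types (x y : 'I_n -> R) (s t : 'S_n).

Definition monomial_mx x s : 'M[R]_n := \matrix_(i, j) (x i * (s i == j)%:R).

Lemma eq_monomial_mx x y s : x =1 y -> monomial_mx x s = monomial_mx y s.
Proof. by move=> eq_xy; apply/matrixP => i j; rewrite !mxE eq_xy. Qed.

Lemma perm_mx_monomial s : perm_mx s = monomial_mx (fun=> 1) s.
Proof. by apply/matrixP => i j; rewrite !mxE mul1r. Qed.

Lemma diag_perm_mx_monomial x s :
  diag_mx (\row_i x i) *m perm_mx s = monomial_mx x s.
Proof. by apply/matrixP => i j; rewrite mul_diag_mx !mxE. Qed.

Lemma mulmx_monomial x y s t :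
  monomial_mx x s *m monomial_mx y t =
  monomial_mx (fun k => x k * y (s k)) (s * t).
Proof.
apply/matrixP => i j; rewrite !mxE (bigD1 (s i)) //= big1 ?addr0.
  by rewrite !mxE eqxx permM mulr1 mulrA.
by move=> k /negPf sik; rewrite !mxE eq_sym sik mulr0 mul0r.
Qed.

Lemma monomial_mx_inj x y s t : (forall k, x k != 0) ->
  monomial_mx x s = monomial_mx y t -> s = t /\ x =1 y.
Proof.
move=> x_neq0 eq_xy.
have xE k : x k = y k * (t k == s k)%:R.
  by have := congr1 (fun M : 'M_n => M k (s k)) eq_xy; rewrite !mxE eqxx mulr1.
have st : s = t.
  apply/permP => k; have := x_neq0 k; rewrite xE.
  by case: (t k =P s k) => [-> // | _]; rewrite mulr0 eqxx.
by split=> // k; rewrite xE st eqxx mulr1.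
Qed.

End MonomialMatrix.

Lemma iter_comm (T : Type) (f g : T -> T) :
  (forall x, f (g x) = g (f x)) -> forall m x, iter m f (g x) = g (iter m f x).
Proof. by move=> fg; elim=> //= m IH x; rewrite IH fg. Qed.

Section GermOfCycleSet.
Variables (n : nat) (cop : 'I_n -> 'I_n -> 'I_n).
Variable Hb : forall s, bijective (cop s).
Hypothesis cycle_cop :
  forall s t u, cop (cop s t) (cop s u) = cop (cop t s) (cop t u).
Variable d : nat.
Hypothesis psik_class : forall s, psik cop d s =1 id.
Hypothesis prim_zeta : d.-primitive_root (zeta d).
Let d_gt0 : (0 < d)%N := prim_order_gt0 prim_zeta.
Let zeta_neq0 : zeta d != 0.
Proof. by rewrite (prim_root_eq0 prim_zeta) -lt0n. Qed.

Lemma psiE s u : psi Hb s u = cop s u.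
Proof. by rewrite permE. Qed.

Lemma psik_diag m s : psik cop m s s = iter m (Tmap cop) s.
Proof. by elim: m => //= m ->. Qed.

(* Right multiplication of a monomial matrix with permutation part p by the
   generator of index p j changes the permutation part to germ_step p j. *)
Definition germ_step (p : 'S_n) (j : 'I_n) : 'S_n := (p * psi Hb (p j))%g.

Lemma germ_stepC p j k :
  germ_step (germ_step p j) k = germ_step (germ_step p k) j.
Proof. by apply/permP => u; rewrite !permM !psiE cycle_cop. Qed.

Lemma iter_germ_step m p j u :
  iter m (germ_step^~ j) p u = psik cop m (p j) (p u).
Proof. by elim: m u => //= m IH u; rewrite permM IH psiE psik_diag IH. Qed.

Lemma iter_germ_step_ordS (x : 'I_d) p j :
  iter (ordS x) (germ_step^~ j) p = germ_step (iter x (germ_step^~ j) p) j.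
Proof.
rewrite /=; have [lt_xd | le_dx] := ltnP x.+1 d; first by rewrite modn_small.
have xd : x.+1 = d by have := ltn_ord x; lia.
rewrite xd modnn; apply/permP => u.
change (p u = iter x.+1 (germ_step^~ j) p u).
by rewrite xd iter_germ_step psik_class.
Qed.

Definition exps_perm (a : {ffun 'I_n -> 'I_d}) : 'S_n :=
  foldr (fun k p => iter (a k) (germ_step^~ k) p) 1%g (enum 'I_n).

Definition exps_bump (a : {ffun 'I_n -> 'I_d}) j : {ffun 'I_n -> 'I_d} :=
  [ffun k => if k == j then ordS (a k) else a k].

Lemma exps_perm_bump a j : exps_perm (exps_bump a j) = germ_step (exps_perm a) j.
Proof.
suff steps_bump l : uniq l ->
    foldr (fun k p => iter (exps_bump a j k) (germ_step^~ k) p) 1%g l =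
    iter (j \in l) (germ_step^~ j)
      (foldr (fun k p => iter (a k) (germ_step^~ k) p) 1%g l).
  by rewrite /exps_perm steps_bump ?enum_uniq ?mem_enum.
elim: l => //= k l IH /andP[k_notin_l /IH ->]; rewrite ffunE inE.
have [<- | k_neq_j] := eqVneq k j; last first.
  by case: (j \in l) => //; apply: (iter_comm (fun p => germ_stepC p j k)).
by rewrite (negPf k_notin_l) iter_germ_step_ordS.
Qed.

Let exps0 : {ffun 'I_n -> 'I_d} := [ffun=> Ordinal d_gt0].

Lemma exps_perm0 : exps_perm exps0 = 1%g.
Proof. by rewrite /exps_perm; elim: (enum _) => //= k l ->; rewrite ffunE. Qed.

Definition germ_mx (a : {ffun 'I_n -> 'I_d}) : 'M[algC]_n :=
  monomial_mx (fun k => zeta d ^+ a k) (exps_perm a).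

Lemma germ_gen_monomial i :
  germ_gen Hb d i =
  monomial_mx (fun k => if k == i then zeta d else 1) (psi Hb i).
Proof. exact: diag_perm_mx_monomial. Qed.

Lemma germ_mx_gen a i :
  germ_mx a *m germ_gen Hb d i = germ_mx (exps_bump a ((exps_perm a)^-1 i)%g).
Proof.
rewrite /germ_mx germ_gen_monomial mulmx_monomial exps_perm_bump.
set j := ((exps_perm a)^-1 i)%g; have pj : exps_perm a j = i by rewrite permKV.
rewrite {1}/germ_step pj; apply: eq_monomial_mx => k.
rewrite ffunE -{1}pj (inj_eq perm_inj).
by case: eqP => [-> | _]; rewrite ?mulr1 //= -exprSr prim_expr_mod.
Qed.

Lemma zeta_expr_inj : injective (fun x : 'I_d => zeta d ^+ x).
Proof.
move=> x y /eqP; rewrite (eq_prim_root_expr prim_zeta) !modn_small //.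
by move/eqP/val_inj.
Qed.

Lemma germ_mx_inj : injective germ_mx.
Proof.
move=> a b /monomial_mx_inj[k | _ eq_ab]; first exact: expf_neq0.
by apply/ffunP => k; apply: zeta_expr_inj; apply: eq_ab.
Qed.

Lemma germ_gen_unitmx i : germ_gen Hb d i \in unitmx.
Proof.
rewrite unitmx_mul unitmx_perm andbT unitmxE det_diag unitfE.
by apply/prodf_neq0 => k _; rewrite mxE; case: ifP; rewrite ?oner_neq0.
Qed.

Lemma in_germ_exists_exps A : in_germ Hb d A -> exists a, A = germ_mx a.
Proof.
elim=> [|{}A i _ [a ->] | {}A i _ [a ->]].
- exists exps0; rewrite /germ_mx exps_perm0 -perm_mx1 perm_mx_monomial.
  by apply: eq_monomial_mx => k; rewrite ffunE.
- by exists (exps_bump a ((exps_perm a)^-1 i)%g); apply: germ_mx_gen.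
pose bump_i b := exps_bump b ((exps_perm b)^-1 i)%g.
have bump_i_inj : injective bump_i.
  move=> b c /(congr1 germ_mx); rewrite -!germ_mx_gen.
  by move/(can_inj (mulmxK (germ_gen_unitmx i)))/germ_mx_inj.
have [unbump_i _ bumpK] := injF_bij bump_i_inj.
by exists (unbump_i a); rewrite -{1}[a]bumpK -germ_mx_gen mulmxK ?germ_gen_unitmx.
Qed.

Lemma germ_mx_perm_eq1 a s : germ_mx a = perm_mx s -> s = 1%g.
Proof.
rewrite perm_mx_monomial => /monomial_mx_inj[k | <- a0]; first exact: expf_neq0.
suff -> : a = exps0 by rewrite exps_perm0.
by apply/ffunP => k; rewrite ffunE; apply: zeta_expr_inj; rewrite /= a0.
Qed.

End GermOfCycleSet.

Theorem mainTheorem12 (n : nat) (cop : 'I_n -> 'I_n -> 'I_n)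
  (Hb : forall s, bijective (cop s))
  (Hcs : forall s t u, cop (cop s t) (cop s u) = cop (cop t s) (cop t u))
  (d : nat) (Hd : is_class cop d) (Hd2 : (2 <= d)%N) :
  forall sigma : 'S_n, in_germ Hb d (perm_mx sigma) -> perm_mx sigma = 1%:M :> 'M[algC]_n.
Proof.
have [_ [psik_class _]] := Hd.
have prim_zeta := prim_root_zeta Hd2.
move=> sigma /(in_germ_exists_exps Hcs psik_class prim_zeta)[a].
by move/esym/(germ_mx_perm_eq1 prim_zeta) ->; rewrite perm_mx1.
Qed.
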